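(* Let $\mathcal L$ be a linearly ordered non-discrete MV-algebra. On the set of filters (in the sense below), define $\mathcal F\equiv\mathcal G$ iff $\mathcal F\sqsubseteq\!\!\to\mathcal G=\mathcal G\sqsubseteq\!\!\to\mathcal F=\{1\}$. Then $\equiv$ is an equivalence relation. Moreover, it is a congruence for ${}^+$ and $\sqsubseteq\!\!\to$: if $\mathcal F_1\equiv\mathcal F_2$ and $\mathcal G_1\equiv\mathcal G_2$, then $\mathcal F_1^+\equiv\mathcal F_2^+$ and $\mathcal F_1\sqsubseteq\!\!\to\mathcal G_1\equiv\mathcal F_2\sqsubseteq\!\!\to\mathcal G_2$.
   Context: $\mathcal L=(L,\oplus,\lnot,0)$ is a linearly ordered MV-algebra. We write $1=\lnot0$, $x\otimes y=\lnot(\lnot x\oplus\lnot y)$, and $x\to y=\lnot x\oplus y$. Non-discrete means no element has an immediate successor or an immediate predecessor. A ''filter'' means a nonempty proper upward-closed subset $\mathcal F$ of $L$ with kernel $\mathcal K(\mathcal F)=\{z:\forall a\notin\mathcal F,\ z\to a\notin\mathcal F\}=\{1\}$. For upward-closed $\mathcal F$ and $a\in L$, let $\mathcal F_a=\{z:z\to a\notin\mathcal F\}$ and $\mathcal F^+=\mathcal F_0=\{z:\lnot z\notin\mathcal F\}$. For $\mathcal F\subseteq\mathcal G$ we put $\mathcal F\sqsubseteq\!\!\to\mathcal G=\bigcap_{a\in L\setminus\mathcal G}\mathcal F_a$, and in general $\mathcal F\sqsubseteq\!\!\to\mathcal G:=(\mathcal F\cap\mathcal G)\sqsubseteq\!\!\to\mathcal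 G$. *)

From Stdlib Require Import Classical.

Record MVAlgebra := {
  mv_car :> Type;
  mv_oplus : mv_car -> mv_car -> mv_car;
  mv_neg : mv_car -> mv_car;
  mv_zero : mv_car;
  mv_oplus_assoc : forall x y z, mv_oplus x (mv_oplus y z) = mv_oplus (mv_oplus x y) z;
  mv_oplus_comm : forall x y, mv_oplus x y = mv_oplus y x;
  mv_oplus_zero : forall x, mv_oplus x mv_zero = x;
  mv_neg_neg : forall x, mv_neg (mv_neg x) = x;
  mv_oplus_one : forall x, mv_oplus x (mv_neg mv_zero) = mv_neg mv_zero;
  mv_luk : forall x y,
    mv_oplus (mv_neg (mv_oplus (mv_neg x) y)) y
    = mv_oplus (mv_neg (mv_oplus (mv_neg y) x)) x
}.

Section MVDefs.
Variable L : MVAlgebra.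

Definition mv_one : L := mv_neg L (mv_zero L).
Definition mv_otimes (x y : L) : L :=
  mv_neg L (mv_oplus L (mv_neg L x) (mv_neg L y)).
Definition mv_impl (x y : L) : L := mv_oplus L (mv_neg L x) y.
Definition mv_le (x y : L) : Prop := mv_impl x y = mv_one.
Definition mv_lt (x y : L) : Prop := mv_le x y /\ x <> y.

Definition linearly_ordered : Prop := forall x y : L, mv_le x y \/ mv_le y x.

Definition immediate_successor (x y : L) : Prop :=
  mv_lt x y /\ ~ (exists z, mv_lt x z /\ mv_lt z y).
Definition immediate_predecessor (x y : L) : Prop :=
  mv_lt y x /\ ~ (exists z, mv_lt y z /\ mv_lt z x).

Definition non_discrete : Prop :=
  (forall x, ~ exists y, immediate_successor x y) /\
  (forall x, ~ exists y, immediate_predecessor x y).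

Definition upward_closed (F : L -> Prop) : Prop :=
  forall x y, F x -> mv_le x y -> F y.

Definition kernel (F : L -> Prop) (z : L) : Prop :=
  forall a, ~ F a -> ~ F (mv_impl z a).

Definition is_filter (F : L -> Prop) : Prop :=
  (exists x, F x) /\ (exists x, ~ F x) /\ upward_closed F /\
  (forall z, kernel F z <-> z = mv_one).

Definition Fsub (F : L -> Prop) (a : L) (z : L) : Prop := ~ F (mv_impl z a).

Definition Fplus (F : L -> Prop) : L -> Prop := Fsub F (mv_zero L).

(* F ⊑→ G := (F ∩ G) ⊑→ G = ⋂_{a ∉ G} (F ∩ G)_a  (for F ⊆ G this agrees with
   ⋂_{a ∉ G} F_a) *)
Definition Fimp (F G : L -> Prop) (z : L) : Prop :=
  forall a, ~ G a -> Fsub (fun x => F x /\ G x) a z.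

Definition is_singleton_one (F : L -> Prop) : Prop := forall z, F z <-> z = mv_one.

Definition fequiv (F G : L -> Prop) : Prop :=
  is_singleton_one (Fimp F G) /\ is_singleton_one (Fimp G F).

End MVDefs.

(* Call an upset X "adherent" to an upset Y if every e > 0 carries some
   point outside Y into X (e ⊕ a ∈ X for some a ∉ Y); X is "tight" if it is
   adherent to itself, which is exactly the kernel condition K(X) = {1}.
   1. The set X ⊑→ Y is {1} iff X ∩ Y is adherent to Y; since upsets of a chain
      are comparable, F ≡ G iff F, G are tight and adherent to each other
      ("mutually adherent").
   2. Non-discreteness lets us halve every e > 0 (d ⊕ d <= e with d > 0), which
      makes adherence transitive; hence ≡ is transitive.
   3. X^+ = {z | ¬z ∉ X} reverses adherence, so ^+ preserves mutual adherence.
   4. F ⊑→ G is (imp_base F G)^+ for the upset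
      imp_base F G = {e | e ⊕ b ∈ F ∩ G for some b ∉ G}, and imp_base preserves
      tightness and mutual adherence in both arguments; step 3 concludes. *)
From Stdlib Require Import Classical.

Notation "x ⊕ y" := (mv_oplus _ x y) (at level 50, left associativity).
Notation "¬ x" := (mv_neg _ x) (at level 35, right associativity).
Notation "x ≤ y" := (mv_le _ x y) (at level 70).

Section MVArithmetic.
Context {L : MVAlgebra}.
Implicit Types x y z a b c e : L.

Lemma oplus_zero_l x : mv_zero L ⊕ x = x.
Proof. rewrite mv_oplus_comm. apply mv_oplus_zero. Qed.

Lemma oplus_one_l x : mv_one L ⊕ x = mv_one L.
Proof. rewrite mv_oplus_comm. apply mv_oplus_one. Qed.

Lemma neg_one : ¬ mv_one L = mv_zero L.
Proof. apply mv_neg_neg. Qed.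

Lemma neg_inj x y : ¬ x = ¬ y -> x = y.
Proof. intro H. rewrite <- (mv_neg_neg L x), H. apply mv_neg_neg. Qed.

Lemma neg_oplus_self x : ¬ x ⊕ x = mv_one L.
Proof.
  pose proof (mv_luk L x (mv_one L)) as H.
  rewrite mv_oplus_one, neg_one, oplus_zero_l in H. symmetry. exact H.
Qed.

Lemma impl_neg e a : mv_impl L (¬ e) a = e ⊕ a.
Proof. unfold mv_impl. rewrite mv_neg_neg. reflexivity. Qed.

Lemma le_iff_exists x y : x ≤ y <-> exists z, y = x ⊕ z.
Proof.
  unfold mv_le, mv_impl. split.
  - intro H. exists (¬ (¬ y ⊕ x)).
    pose proof (mv_luk L x y) as Hl. rewrite H, neg_one, oplus_zero_l in Hl.
    rewrite mv_oplus_comm. exact Hl.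
  - intros [z ->]. rewrite mv_oplus_assoc, neg_oplus_self. apply oplus_one_l.
Qed.

Lemma le_refl x : x ≤ x.
Proof. apply le_iff_exists. exists (mv_zero L). symmetry. apply mv_oplus_zero. Qed.

Lemma le_trans x y z : x ≤ y -> y ≤ z -> x ≤ z.
Proof.
  rewrite !le_iff_exists. intros [a ->] [b ->]. exists (a ⊕ b).
  symmetry. apply mv_oplus_assoc.
Qed.

Lemma le_zero x : mv_zero L ≤ x.
Proof. apply le_iff_exists. exists x. symmetry. apply oplus_zero_l. Qed.

Lemma le_oplus_r x c : x ≤ x ⊕ c.
Proof. apply le_iff_exists. exists c. reflexivity. Qed.

Lemma le_oplus_l x c : x ≤ c ⊕ x.
Proof. rewrite mv_oplus_comm. apply le_oplus_r. Qed.

Lemma oplus_le_compat_r x y c : x ≤ y -> x ⊕ c ≤ y ⊕ c.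
Proof.
  rewrite !le_iff_exists. intros [a ->]. exists a.
  rewrite <- !mv_oplus_assoc, (mv_oplus_comm L a c). reflexivity.
Qed.

Lemma oplus_le_compat_l x y c : x ≤ y -> c ⊕ x ≤ c ⊕ y.
Proof. rewrite !(mv_oplus_comm L c). apply oplus_le_compat_r. Qed.

Lemma oplus_le_compat x y x' y' : x ≤ x' -> y ≤ y' -> x ⊕ y ≤ x' ⊕ y'.
Proof.
  intros Hx Hy. apply le_trans with (x' ⊕ y).
  - apply oplus_le_compat_r, Hx.
  - apply oplus_le_compat_l, Hy.
Qed.

Lemma neg_le x y : x ≤ y -> ¬ y ≤ ¬ x.
Proof. unfold mv_le, mv_impl. rewrite mv_neg_neg, mv_oplus_comm. auto. Qed.

(* Truncated subtraction undoes translation: (e ⊕ b) ⊖ e <= b, where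
   x ⊖ e := ¬(e ⊕ ¬x). *)
Lemma neg_oplus_neg_le e b : ¬ (e ⊕ ¬ (e ⊕ b)) ≤ b.
Proof.
  apply le_trans with (¬ ¬ b); [|rewrite mv_neg_neg; apply le_refl].
  apply neg_le.
  pose proof (mv_luk L (¬ b) e) as Hl. rewrite mv_neg_neg in Hl.
  rewrite (mv_oplus_comm L e (¬ (e ⊕ b))), (mv_oplus_comm L e b), Hl.
  apply le_oplus_l.
Qed.

End MVArithmetic.

Section Adherence.
Context {L : MVAlgebra}.
Implicit Types (X Y : L -> Prop) (x y z a b e : L).

Definition inter X Y (x : L) : Prop := X x /\ Y x.

Definition adherent X Y : Prop :=
  forall e, e <> mv_zero L -> exists a, ~ Y a /\ X (e ⊕ a).

(* Tightness is the kernel condition K(X) = {1} (lemma filter_tight). *)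
Definition tight X : Prop := adherent X X.

(* In a chain this characterises F ≡ G (lemma fequiv_iff). *)
Definition mutually_adherent X Y : Prop :=
  tight X /\ tight Y /\ adherent X Y /\ adherent Y X.

(* The common shape of the kernel K(X) and of X ⊑→ Y = escapes (X ∩ Y) Y. *)
Definition escapes X Y z : Prop := forall a, ~ Y a -> ~ X (mv_impl L z a).

Lemma adherent_mono X X' Y Y' :
  (forall x, X x -> X' x) -> (forall x, Y' x -> Y x) ->
  adherent X Y -> adherent X' Y'.
Proof.
  intros HX HY A e He. destruct (A e He) as (a & Ya & Xa).
  exists a. split; auto.
Qed.

Lemma escapes_trivial_iff X Y : (forall x, X x -> Y x) ->
  ((forall z, escapes X Y z <-> z = mv_one L) <-> adherent X Y).
Proof.
  intro HXY. split.
  - intros H e He. apply NNPP. intro Hn.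
    assert (Hesc : escapes X Y (¬ e)).
    { intros a Ya Xa. rewrite impl_neg in Xa. apply Hn. exists a. auto. }
    apply He, neg_inj. rewrite (proj1 (H _) Hesc). reflexivity.
  - intros A z. split.
    + intro Hz. apply NNPP. intro Hz1.
      assert (Hnz : ¬ z <> mv_zero L).
      { intro E. apply Hz1. rewrite <- (mv_neg_neg L z), E. reflexivity. }
      destruct (A _ Hnz) as (a & Ya & Xa). exact (Hz a Ya Xa).
    + intros -> a Ya Xa. apply Ya, HXY.
      unfold mv_impl in Xa. rewrite neg_one, oplus_zero_l in Xa. exact Xa.
Qed.

(* Filters are tight upsets: their kernel is escapes F F. *)
Lemma filter_tight F : is_filter L F -> upward_closed L F /\ tight F.
Proof.
  intros (_ & _ & HU & HK). split; [exact HU|].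
  exact (proj1 (escapes_trivial_iff F F (fun _ h => h)) HK).
Qed.

Lemma Fimp_trivial_iff X Y :
  is_singleton_one L (Fimp L X Y) <-> adherent (inter X Y) Y.
Proof. apply escapes_trivial_iff. intros x Hx. apply Hx. Qed.

Lemma Fimp_ext X X' Y Y' :
  (forall x, X x <-> X' x) -> (forall x, Y x <-> Y' x) ->
  forall z, Fimp L X Y z <-> Fimp L X' Y' z.
Proof. unfold Fimp, Fsub. firstorder. Qed.

Lemma fequiv_ext X X' Y Y' :
  (forall x, X x <-> X' x) -> (forall x, Y x <-> Y' x) ->
  fequiv L X Y -> fequiv L X' Y'.
Proof.
  intros EX EY [H1 H2]. split; intro z.
  - rewrite <- (Fimp_ext X X' Y Y' EX EY). apply H1.
  - rewrite <- (Fimp_ext Y Y' X X' EY EX). apply H2.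
Qed.

Lemma Fplus_iff X z : Fplus L X z <-> ~ X (¬ z).
Proof. unfold Fplus, Fsub, mv_impl. rewrite mv_oplus_zero. tauto. Qed.

Lemma Fplus_upward X : upward_closed L X -> upward_closed L (Fplus L X).
Proof.
  intros HX x y Hx Hxy. rewrite Fplus_iff in *. intro H.
  exact (Hx (HX _ _ H (neg_le x y Hxy))).
Qed.

Lemma adherent_Fplus X Y : upward_closed L Y ->
  adherent X Y -> adherent (Fplus L Y) (Fplus L X).
Proof.
  intros HY A e He. destruct (A e He) as (b & Yb & Xb).
  exists (¬ (e ⊕ b)). rewrite !Fplus_iff, mv_neg_neg. split; [tauto|].
  intro H. exact (Yb (HY _ _ H (neg_oplus_neg_le e b))).
Qed.

Lemma mutually_adherent_Fplus X Y : upward_closed L X -> upward_closed L Y ->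
  mutually_adherent X Y -> mutually_adherent (Fplus L X) (Fplus L Y).
Proof.
  intros HX HY (TX & TY & AXY & AYX).
  repeat split; apply adherent_Fplus; assumption.
Qed.

(* The upset whose ^+ is F ⊑→ G. *)
Definition imp_base X Y e : Prop := exists b, ~ Y b /\ inter X Y (e ⊕ b).

Lemma Fimp_as_Fplus X Y z : Fimp L X Y z <-> Fplus L (imp_base X Y) z.
Proof.
  rewrite Fplus_iff. unfold Fimp, Fsub, imp_base, mv_impl. split.
  - intros H (b & Yb & Hb). exact (H b Yb Hb).
  - intros H a Ya Ha. apply H. exists a. auto.
Qed.

Lemma inter_upward X Y : upward_closed L X -> upward_closed L Y ->
  upward_closed L (inter X Y).
Proof.
  intros HX HY x y [Xx Yx] Hxy.
  split; [exact (HX _ _ Xx Hxy)|exact (HY _ _ Yx Hxy)].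
Qed.

Lemma imp_base_upward X Y : upward_closed L X -> upward_closed L Y ->
  upward_closed L (imp_base X Y).
Proof.
  intros HX HY x y (b & Yb & Hb) Hxy. exists b. split; [exact Yb|].
  exact (inter_upward X Y HX HY _ _ Hb (oplus_le_compat_r x y b Hxy)).
Qed.

Section Chain.
Hypothesis Hlin : linearly_ordered L.

Lemma upsets_comparable X Y : upward_closed L X -> upward_closed L Y ->
  (forall x, X x -> Y x) \/ (forall x, Y x -> X x).
Proof.
  intros HX HY. destruct (classic (forall x, X x -> Y x)) as [H|H]; [left; exact H|].
  right. apply not_all_ex_not in H. destruct H as [x Hx].
  apply imply_to_and in Hx. destruct Hx as [Xx nYx].
  intros y Yy. destruct (Hlin x y) as [Hxy|Hyx].
  - exact (HX x y Xx Hxy).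
  - exfalso. exact (nYx (HY y x Yy Hyx)).
Qed.

Lemma outside_below Y b y : upward_closed L Y -> ~ Y b -> Y y -> b ≤ y.
Proof.
  intros HY Yb Yy. destruct (Hlin b y) as [H|H]; [exact H|].
  exfalso. exact (Yb (HY y b Yy H)).
Qed.

Lemma fequiv_iff X Y : upward_closed L X -> upward_closed L Y ->
  fequiv L X Y <-> mutually_adherent X Y.
Proof.
  intros HX HY. unfold fequiv. rewrite !Fimp_trivial_iff. split.
  - intros [AXY AYX]. repeat split.
    + apply (adherent_mono _ _ _ _ (fun x h => proj2 h) (fun x h => h) AYX).
    + apply (adherent_mono _ _ _ _ (fun x h => proj2 h) (fun x h => h) AXY).
    + apply (adherent_mono _ _ _ _ (fun x h => proj1 h) (fun x h => h) AXY).
    + apply (adherent_mono _ _ _ _ (fun x h => proj1 h) (fun x h => h) AYX).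
  - intros (TX & TY & AXY & AYX).
    destruct (upsets_comparable X Y HX HY) as [S|S]; split.
    + refine (adherent_mono _ _ _ _ _ (fun x h => h) AXY). split; auto.
    + refine (adherent_mono _ _ _ _ _ (fun x h => h) TX). split; auto.
    + refine (adherent_mono _ _ _ _ _ (fun x h => h) TY). split; auto.
    + refine (adherent_mono _ _ _ _ _ (fun x h => h) AYX). split; auto.
Qed.

Lemma filter_fequiv_iff F G : is_filter L F -> is_filter L G ->
  fequiv L F G <-> mutually_adherent F G.
Proof.
  intros HF HG. apply fequiv_iff; [apply (filter_tight F HF)|apply (filter_tight G HG)].
Qed.

Lemma adherent_shift X Y e y : upward_closed L X -> upward_closed L Y ->
  adherent X Y -> e <> mv_zero L -> Y y -> X (e ⊕ y).
Proof.
  intros HX HY A He Yy. destruct (A e He) as (a & Ya & Xa).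
  apply (HX _ _ Xa), oplus_le_compat_l, (outside_below Y); assumption.
Qed.

Lemma inter_tight X Y : upward_closed L X -> upward_closed L Y ->
  tight X -> tight Y -> tight (inter X Y).
Proof.
  intros HX HY TX TY. destruct (upsets_comparable X Y HX HY) as [S|S].
  - refine (adherent_mono _ _ _ _ _ (fun x h => proj1 h) TX). split; auto.
  - refine (adherent_mono _ _ _ _ _ (fun x h => proj2 h) TY). split; auto.
Qed.

Section NonDiscrete.
Hypothesis Hnd : non_discrete L.

Lemma halving e : e <> mv_zero L -> exists d, d <> mv_zero L /\ d ⊕ d ≤ e.
Proof.
  intro He. destruct Hnd as [Hsucc _].
  assert (H : exists d0, mv_lt L (mv_zero L) d0 /\ mv_lt L d0 e).
  { apply NNPP. intro Hn. apply (Hsucc (mv_zero L)). exists e.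
    repeat split; auto. apply le_zero. }
  destruct H as (d0 & [_ Hd0] & [Hle Hne]).
  destruct (proj1 (le_iff_exists d0 e) Hle) as [r Hr].
  assert (Hr0 : r <> mv_zero L).
  { intros ->. apply Hne. rewrite Hr. symmetry. apply mv_oplus_zero. }
  rewrite Hr. destruct (Hlin d0 r) as [H|H].
  - exists d0. split; [auto|]. apply oplus_le_compat; [apply le_refl|exact H].
  - exists r. split; [exact Hr0|]. apply oplus_le_compat; [exact H|apply le_refl].
Qed.


(* Thanks to halving, adherence is transitive. *)
Lemma adherent_trans X Y Z : upward_closed L X -> upward_closed L Y ->
  adherent X Y -> adherent Y Z -> adherent X Z.
Proof.
  intros HX HY AXY AYZ e He.
  destruct (halving e He) as (d & Hd & Hdd).
  destruct (AYZ d Hd) as (a & Za & Ya).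
  destruct (AXY d Hd) as (b & Yb & Xb).
  exists a. split; [exact Za|]. apply (HX _ _ Xb).
  apply le_trans with (d ⊕ (d ⊕ a)).
  - apply oplus_le_compat_l, (outside_below Y); assumption.
  - rewrite mv_oplus_assoc. apply oplus_le_compat_r, Hdd.
Qed.

Lemma mutually_adherent_trans X Y Z :
  upward_closed L X -> upward_closed L Y -> upward_closed L Z ->
  mutually_adherent X Y -> mutually_adherent Y Z -> mutually_adherent X Z.
Proof.
  intros HX HY HZ (TX & _ & AXY & AYX) (_ & TZ & AYZ & AZY).
  repeat split; [exact TX | exact TZ | |].
  - exact (adherent_trans X Y Z HX HY AXY AYZ).
  - exact (adherent_trans Z Y X HZ HY AZY AYX).
Qed.

(* Given e, halve it to d; pick f with
   d ⊕ f ∈ X ∩ Y ∌ f and b with d ⊕ b ∈ Y ∌ b.  If f <= d ⊕ b the point 0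
   works, otherwise the difference r of f = (d ⊕ b) ⊕ r does. *)
Lemma imp_base_tight X Y : upward_closed L X -> upward_closed L Y ->
  tight X -> tight Y -> tight (imp_base X Y).
Proof.
  intros HX HY TX TY e He.
  pose proof (inter_upward X Y HX HY) as HC.
  destruct (halving e He) as (d & Hd & Hdd).
  destruct (inter_tight X Y HX HY TX TY d Hd) as (f & Cf & Cdf).
  destruct (TY d Hd) as (b & Yb & Ydb).
  assert (Hreach : forall c, d ⊕ f ≤ e ⊕ c ⊕ b -> imp_base X Y (e ⊕ c)).
  { intros c Hc. exists b. split; [exact Yb|exact (HC _ _ Cdf Hc)]. }
  destruct (Hlin f (d ⊕ b)) as [Hfb|Hbf].
  - exists (mv_zero L). split.
    + intros (b' & Yb' & Hb'). rewrite oplus_zero_l in Hb'. exact (Yb' (proj2 Hb')).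
    + apply Hreach. rewrite mv_oplus_zero.
      apply le_trans with (d ⊕ (d ⊕ b)); [apply oplus_le_compat_l, Hfb|].
      rewrite mv_oplus_assoc. apply oplus_le_compat_r, Hdd.
  - destruct (proj1 (le_iff_exists _ _) Hbf) as [r Hr].
    exists r. split.
    + intros (b' & Yb' & Hb'). apply Cf, (HC _ _ Hb').
      rewrite Hr, (mv_oplus_comm L r b'). apply oplus_le_compat_r.
      apply (outside_below Y); assumption.
    + apply Hreach.
      assert (E : d ⊕ f = d ⊕ d ⊕ r ⊕ b).
      { rewrite Hr, !mv_oplus_assoc, <- (mv_oplus_assoc L (d ⊕ d) b r),
          (mv_oplus_comm L b r), mv_oplus_assoc. reflexivity. }
      rewrite E. apply oplus_le_compat_r, oplus_le_compat_r, Hdd.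
Qed.

Lemma imp_base_adherent_l X1 X2 Y :
  upward_closed L X1 -> upward_closed L X2 -> upward_closed L Y ->
  adherent X2 X1 -> tight (imp_base X1 Y) ->
  adherent (imp_base X2 Y) (imp_base X1 Y).
Proof.
  intros HX1 HX2 HY A T e He.
  destruct (halving e He) as (d & Hd & Hdd).
  destruct (T d Hd) as (e0 & N0 & (b & Yb & [X1b Y1b])).
  assert (Hle : d ⊕ (d ⊕ e0 ⊕ b) ≤ e ⊕ e0 ⊕ b).
  { rewrite !mv_oplus_assoc. apply oplus_le_compat_r, oplus_le_compat_r, Hdd. }
  exists e0. split; [exact N0|]. exists b. split; [exact Yb|]. split.
  - exact (HX2 _ _ (adherent_shift X2 X1 d _ HX2 HX1 A Hd X1b) Hle).
  - exact (HY _ _ Y1b (le_trans _ _ _ (le_oplus_l _ d) Hle)).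
Qed.

Lemma imp_base_adherent_r X Y1 Y2 :
  upward_closed L X -> upward_closed L Y1 -> upward_closed L Y2 ->
  adherent Y1 Y2 -> adherent Y2 Y1 -> tight (imp_base X Y1) ->
  adherent (imp_base X Y2) (imp_base X Y1).
Proof.
  intros HX HY1 HY2 A12 A21 T e He.
  destruct (halving e He) as (h & Hh & Hhh).
  destruct (halving h Hh) as (q & Hq & Hqq).
  destruct (T q Hq) as (e0 & N0 & (b & Y1b & [Xb Y1qb])).
  destruct (A12 q Hq) as (a & Y2a & Y1qa).
  assert (Hba : b ≤ q ⊕ a) by (apply (outside_below Y1); assumption).
  assert (Hle : h ⊕ (q ⊕ e0 ⊕ b) ≤ e ⊕ e0 ⊕ a).
  { apply le_trans with (h ⊕ (q ⊕ e0 ⊕ (q ⊕ a))).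
    - apply oplus_le_compat_l, oplus_le_compat_l, Hba.
    - assert (E : h ⊕ (q ⊕ e0 ⊕ (q ⊕ a)) = h ⊕ (q ⊕ q) ⊕ e0 ⊕ a).
      { rewrite !mv_oplus_assoc, <- (mv_oplus_assoc L (h ⊕ q) e0 q),
          (mv_oplus_comm L e0 q), mv_oplus_assoc. reflexivity. }
      rewrite E. apply oplus_le_compat_r, oplus_le_compat_r.
      apply le_trans with (h ⊕ h); [apply oplus_le_compat_l, Hqq|exact Hhh]. }
  exists e0. split; [exact N0|]. exists a. split; [exact Y2a|]. split.
  - exact (HX _ _ Xb (le_trans _ _ _ (le_oplus_l _ h) Hle)).
  - exact (HY2 _ _ (adherent_shift Y2 Y1 h _ HY2 HY1 A21 Hh Y1qb) Hle).
Qed.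

(* Both effects combined, through the intermediate set imp_base X Y'. *)
Lemma imp_base_adherent X X' Y Y' :
  upward_closed L X -> upward_closed L X' ->
  upward_closed L Y -> upward_closed L Y' ->
  tight X -> tight Y -> tight Y' ->
  adherent X' X -> adherent Y Y' -> adherent Y' Y ->
  adherent (imp_base X' Y') (imp_base X Y).
Proof.
  intros HX HX' HY HY' TX TY TY' AX AYY' AY'Y.
  apply adherent_trans with (imp_base X Y');
    try (apply imp_base_upward; assumption).
  - apply imp_base_adherent_l; try assumption. apply imp_base_tight; assumption.
  - apply imp_base_adherent_r; try assumption. apply imp_base_tight; assumption.
Qed.

Lemma mutually_adherent_imp_base X1 X2 Y1 Y2 :
  upward_closed L X1 -> upward_closed L X2 ->
  upward_closed L Y1 -> upward_closed L Y2 ->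
  mutually_adherent X1 X2 -> mutually_adherent Y1 Y2 ->
  mutually_adherent (imp_base X1 Y1) (imp_base X2 Y2).
Proof.
  intros HX1 HX2 HY1 HY2 (TX1 & TX2 & A12 & A21) (TY1 & TY2 & B12 & B21).
  repeat split; (apply imp_base_tight || apply imp_base_adherent); assumption.
Qed.

(* ⊑→ is a congruence: F ⊑→ G = (imp_base F G)^+, and both imp_base and ^+
   preserve mutual adherence. *)
Lemma fequiv_Fimp_congr X1 X2 Y1 Y2 :
  upward_closed L X1 -> upward_closed L X2 ->
  upward_closed L Y1 -> upward_closed L Y2 ->
  mutually_adherent X1 X2 -> mutually_adherent Y1 Y2 ->
  fequiv L (Fimp L X1 Y1) (Fimp L X2 Y2).
Proof.
  intros HX1 HX2 HY1 HY2 MX MY.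
  pose proof (imp_base_upward X1 Y1 HX1 HY1) as H1.
  pose proof (imp_base_upward X2 Y2 HX2 HY2) as H2.
  apply (fequiv_ext (Fplus L (imp_base X1 Y1)) _ (Fplus L (imp_base X2 Y2)));
    try (intro z; symmetry; apply Fimp_as_Fplus).
  apply fequiv_iff; try (apply Fplus_upward; assumption).
  apply mutually_adherent_Fplus; try assumption.
  apply mutually_adherent_imp_base; assumption.
Qed.

End NonDiscrete.
End Chain.
End Adherence.

Theorem mainTheorem17 (L : MVAlgebra)
  (Hlin : linearly_ordered L) (Hnd : non_discrete L) :
  (* ≡ is an equivalence relation on the set of filters *)
  (forall F, is_filter L F -> fequiv L F F) /\
  (forall F G, is_filter L F -> is_filter L G -> fequiv L F G -> fequiv L G F) /\
  (forall F G H, is_filter L F -> is_filter L G -> is_filter L H ->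
     fequiv L F G -> fequiv L G H -> fequiv L F H) /\
  (* congruence for ^+ and ⊑→ *)
  (forall F1 F2 G1 G2,
     is_filter L F1 -> is_filter L F2 -> is_filter L G1 -> is_filter L G2 ->
     fequiv L F1 F2 -> fequiv L G1 G2 ->
     fequiv L (Fplus L F1) (Fplus L F2) /\
     fequiv L (Fimp L F1 G1) (Fimp L F2 G2)).
Proof.
  split; [|split; [|split]].
  - intros F HF. destruct (filter_tight F HF) as [UF TF].
    apply (filter_fequiv_iff Hlin); try assumption. repeat split; assumption.
  - intros F G _ _ [H1 H2]. split; assumption.
  - intros F G H HF HG HH.
    rewrite !(filter_fequiv_iff Hlin) by assumption.
    apply (mutually_adherent_trans Hlin Hnd); apply filter_tight; assumption.
  - intros F1 F2 G1 G2 HF1 HF2 HG1 HG2.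
    rewrite !(filter_fequiv_iff Hlin) by assumption. intros MF MG.
    destruct (filter_tight F1 HF1) as [UF1 _], (filter_tight F2 HF2) as [UF2 _],
      (filter_tight G1 HG1) as [UG1 _], (filter_tight G2 HG2) as [UG2 _].
    split.
    + apply (fequiv_iff Hlin); try (apply Fplus_upward; assumption).
      apply mutually_adherent_Fplus; assumption.
    + apply (fequiv_Fimp_congr Hlin Hnd); assumption.
Qed.
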